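(* Let $X$ be a real Banach space, $T:X\rightrightarrows X^*$ monotone and $\mu>0$. The following are equivalent: (1) for every $\varepsilon>0$ and every $z_0\in X$, the norm closure of $R(T(\cdot+z_0)+\mu J_\varepsilon)$ equals $X^*$; (2) for every $\varepsilon>0$ and every $z_0\in X$, $R(T(\cdot+z_0)+\mu J_\varepsilon)=X^*$.
   Context: A point-to-set operator $T:X\rightrightarrows X^*$ is a subset $T\subset X\times X^*$ with $T(x)=\{x^*:(x,x^* )\in T\}$; it is monotone if $\langle x-y,x^*-y^*\rangle\ge0$ for all $(x,x^* ),(y,y^* )\in T$. For $\varepsilon\ge0$, $J_\varepsilon(x)=\{x^*\in X^*:\ \tfrac12\|x\|^2+\tfrac12\|x^*\|^2\le\langle x,x^*\rangle+\varepsilon\}$. For $z_0\in X$, $T(\cdot+z_0)+\mu J_\varepsilon$ denotes the operator $x\mapsto\{a^*+\mu b^*: a^*\in T(x+z_0),\ b^*\in J_\varepsilon(x)\}$, and $R(S)=\bigcup_{x\in X}S(x)$ denotes the range of an operator $S$. *)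

From Stdlib Require Import Reals Lra ClassicalEpsilon.
Open Scope R_scope.

Record Banach : Type := {
  carrier :> Type;
  vzero : carrier;
  vadd : carrier -> carrier -> carrier;
  vopp : carrier -> carrier;
  vscal : R -> carrier -> carrier;
  vnorm : carrier -> R;
  vadd_assoc : forall x y z, vadd x (vadd y z) = vadd (vadd x y) z;
  vadd_comm : forall x y, vadd x y = vadd y x;
  vadd_0 : forall x, vadd x vzero = x;
  vadd_opp : forall x, vadd x (vopp x) = vzero;
  vscal_1 : forall x, vscal 1 x = x;
  vscal_assoc : forall a b x, vscal a (vscal b x) = vscal (a * b) x;
  vscal_distr_v : forall a x y, vscal a (vadd x y) = vadd (vscal a x) (vscal a y);
  vscal_distr_s : forall a b x, vscal (a + b) x = vadd (vscal a x) (vscal b x);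
  vnorm_nonneg : forall x, 0 <= vnorm x;
  vnorm_eq0 : forall x, vnorm x = 0 -> x = vzero;
  vnorm_scal : forall a x, vnorm (vscal a x) = Rabs a * vnorm x;
  vnorm_triangle : forall x y, vnorm (vadd x y) <= vnorm x + vnorm y;
  vcomplete : forall u : nat -> carrier,
    (forall e, 0 < e -> exists N, forall n m, (N <= n)%nat -> (N <= m)%nat ->
        vnorm (vadd (u n) (vopp (u m))) < e) ->
    exists l, forall e, 0 < e -> exists N, forall n, (N <= n)%nat ->
        vnorm (vadd (u n) (vopp l)) < e
}.

Arguments vzero {_}. Arguments vadd {_}. Arguments vopp {_}.
Arguments vscal {_}. Arguments vnorm {_}.

Record dual (X : Banach) : Type := {
  dfun :> X -> R;
  dlin_add : forall x y, dfun (vadd x y) = dfun x + dfun y;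
  dlin_scal : forall a x, dfun (vscal a x) = a * dfun x;
  dbounded : exists C, forall x, Rabs (dfun x) <= C * vnorm x
}.

Definition dnorm {X : Banach} (f : X -> R) : R :=
  epsilon (inhabits 0)
    (is_lub (fun r => exists x : X, vnorm x <= 1 /\ r = Rabs (f x))).

Definition pair {X : Banach} (x : X) (xs : dual X) : R := xs x.

Definition operator (X : Banach) := X -> dual X -> Prop.

Definition monotone {X : Banach} (T : operator X) : Prop :=
  forall x y (xs ys : dual X), T x xs -> T y ys ->
    0 <= pair (vadd x (vopp y)) xs - pair (vadd x (vopp y)) ys.

Definition Jeps {X : Banach} (eps : R) : operator X :=
  fun x xs => / 2 * vnorm x ^ 2 + / 2 * dnorm xs ^ 2 <= pair x xs + eps.

Definition shift_sum {X : Banach} (T : operator X) (z0 : X) (mu eps : R)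
  : operator X :=
  fun x xs => exists a b : dual X, T (vadd x z0) a /\ Jeps eps x b /\
    forall y, xs y = a y + mu * b y.

Definition range {X : Banach} (S : operator X) : dual X -> Prop :=
  fun xs => exists x, S x xs.

Definition dclosure {X : Banach} (A : dual X -> Prop) : dual X -> Prop :=
  fun xs => forall d, 0 < d -> exists s, A s /\ dnorm (fun y => s y - xs y) < d.

From Stdlib Require Import Reals Lra Psatz ClassicalEpsilon.
Open Scope R_scope.

(* Proof of mainTheorem2: (2) => (1) because every set lies in its closure.
   For (1) => (2) fix eps, z0 and a target xs.
   - Condition (1) makes the graph of T(. + z0) nonempty; a point (x0, a0) of
     it together with monotonicity yields an a priori bound: every solution
     x of  s in T(x + z0) + mu J_{eps/2}(x)  with ||s|| <= ||xs|| + 1 has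
     ||x|| + ||b|| <= M, where b in J_{eps/2}(x) is the J-part of s
     (lemma [resolvent_bound]).
   - Condition (1) again gives such a solution with ||s - xs|| <= mu delta
     for a small delta.  Replacing b by b' = b + (xs - s)/mu solves the
     equation exactly with right-hand side xs, and b' lies in a slightly
     larger enlargement J_{eps/2 + delta (||x|| + ||b||) + delta^2/2}(x)
     (lemmas [Jeps_perturb], [shift_sum_correct]); by the a priori bound
     and the choice of delta ([small_step]) this is at most J_eps(x). *)

Lemma vscal_0 {X : Banach} (x : X) : vscal 0 x = vzero.
Proof.
  set (u := vscal 0 x).
  assert (Hu : u = vadd u u)
    by (unfold u; rewrite <- vscal_distr_s, Rplus_0_l; reflexivity).
  transitivity (vadd (vadd u u) (vopp u)).
  - rewrite <- vadd_assoc, vadd_opp, vadd_0; reflexivity.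
  - rewrite <- Hu, vadd_opp; reflexivity.
Qed.

Lemma vnorm_0 {X : Banach} : vnorm (@vzero X) = 0.
Proof. rewrite <- (vscal_0 (@vzero X)), vnorm_scal, Rabs_R0; ring. Qed.

Definition bounded_linear {X : Banach} (f : X -> R) : Prop :=
  (forall x y, f (vadd x y) = f x + f y) /\
  (forall a x, f (vscal a x) = a * f x) /\
  (exists C, forall x, Rabs (f x) <= C * vnorm x).

Lemma dual_bounded_linear {X : Banach} (f : dual X) : bounded_linear f.
Proof. split; [apply dlin_add | split; [apply dlin_scal | apply dbounded]]. Qed.

Definition to_dual {X : Banach} (f : X -> R) (Hf : bounded_linear f) : dual X :=
  let '(conj Hadd (conj Hscal Hbd)) := Hf in Build_dual X f Hadd Hscal Hbd.

Lemma to_dual_apply {X : Banach} (f : X -> R) (Hf : bounded_linear f) x :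
  to_dual f Hf x = f x.
Proof. destruct Hf as [? [? ?]]; reflexivity. Qed.

Lemma linear_zero {X : Banach} (f : X -> R) : bounded_linear f -> f vzero = 0.
Proof.
  intros [Hadd _]. pose proof (Hadd vzero vzero) as H. rewrite vadd_0 in H. lra.
Qed.

Lemma linear_opp {X : Banach} (f : X -> R) y :
  bounded_linear f -> f (vopp y) = - f y.
Proof.
  intros Hf. pose proof (linear_zero f Hf) as H0. destruct Hf as [Hadd _].
  pose proof (Hadd y (vopp y)) as H. rewrite vadd_opp, H0 in H. lra.
Qed.

Lemma pair_shift_diff {X : Banach} (f : dual X) (x y z : X) :
  pair (vadd (vadd x z) (vopp (vadd y z))) f = f x - f y.
Proof.
  unfold pair.
  rewrite dlin_add, (linear_opp _ _ (dual_bounded_linear f)), !dlin_add; ring.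
Qed.

Lemma bounded_linear_lincomb {X : Banach} (f g : X -> R) (c : R) :
  bounded_linear f -> bounded_linear g -> bounded_linear (fun y => f y + c * g y).
Proof.
  intros [fa [fs [Cf HCf]]] [ga [gs [Cg HCg]]]. split; [|split].
  - intros; rewrite fa, ga; ring.
  - intros; rewrite fs, gs; ring.
  - exists (Cf + Rabs c * Cg). intros x.
    pose proof (HCf x). pose proof (HCg x). pose proof (Rabs_pos c).
    eapply Rle_trans; [apply Rabs_triang|]. rewrite Rabs_mult. nra.
Qed.

Lemma bounded_linear_sub {X : Banach} (f g : X -> R) :
  bounded_linear f -> bounded_linear g -> bounded_linear (fun y => f y - g y).
Proof.
  intros Hf Hg. destruct (bounded_linear_lincomb f g (-1) Hf Hg) as [Ha [Hs [C HC]]].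
  split; [|split].
  - intros x y. pose proof (Ha x y). lra.
  - intros a x. pose proof (Hs a x). lra.
  - exists C. intros x. specialize (HC x). replace (f x - g x) with (f x + -1 * g x) by ring.
    exact HC.
Qed.

Lemma dnorm_lub {X : Banach} (f : X -> R) : bounded_linear f ->
  is_lub (fun r => exists x : X, vnorm x <= 1 /\ r = Rabs (f x)) (dnorm f).
Proof.
  intros [_ [_ [C HC]]]. unfold dnorm. apply epsilon_spec.
  edestruct completeness as [m Hm]; [| | exists m; exact Hm].
  - exists (Rmax C 0). intros r [x [Hx ->]].
    pose proof (HC x). pose proof (vnorm_nonneg _ x).
    pose proof (Rmax_l C 0). pose proof (Rmax_r C 0). nra.
  - exists (Rabs (f vzero)), vzero. rewrite vnorm_0. split; [lra | reflexivity].
Qed.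

Lemma dnorm_nonneg {X : Banach} (f : X -> R) : bounded_linear f -> 0 <= dnorm f.
Proof.
  intros Hf. apply (proj1 (dnorm_lub f Hf)).
  exists vzero. rewrite vnorm_0, (linear_zero f Hf), Rabs_R0. split; [lra | reflexivity].
Qed.

Lemma dnorm_bound {X : Banach} (f : X -> R) x :
  bounded_linear f -> Rabs (f x) <= dnorm f * vnorm x.
Proof.
  intros Hf. destruct (Req_dec (vnorm x) 0) as [H0|H0].
  { apply vnorm_eq0 in H0. subst. rewrite vnorm_0, (linear_zero f Hf), Rabs_R0. lra. }
  pose proof (vnorm_nonneg _ x) as Hn.
  assert (Hinv : 0 < / vnorm x) by (apply Rinv_0_lt_compat; lra).
  set (y := vscal (/ vnorm x) x).
  assert (Hy : vnorm y = 1).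
  { unfold y. rewrite vnorm_scal, Rabs_right by lra. field. lra. }
  assert (Hfy : Rabs (f y) <= dnorm f).
  { apply (proj1 (dnorm_lub f Hf)). exists y. split; [lra | reflexivity]. }
  destruct Hf as [_ [Hs _]]. unfold y in Hfy.
  rewrite Hs, Rabs_mult, (Rabs_right (/ vnorm x)) in Hfy by lra.
  apply (Rmult_le_compat_r (vnorm x)) in Hfy; [|lra].
  rewrite Rmult_comm, <- Rmult_assoc, Rinv_r, Rmult_1_l in Hfy; lra.
Qed.

Lemma Rabs_le_both (x c : R) : Rabs x <= c -> x <= c /\ - x <= c.
Proof.
  intros H. pose proof (Rle_abs x). pose proof (Rle_abs (- x)).
  rewrite Rabs_Ropp in *. lra.
Qed.

Lemma dnorm_bound_both {X : Banach} (f : X -> R) x : bounded_linear f ->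
  f x <= dnorm f * vnorm x /\ - f x <= dnorm f * vnorm x.
Proof. intros Hf. exact (Rabs_le_both _ _ (dnorm_bound f x Hf)). Qed.

Lemma dnorm_le {X : Banach} (f : X -> R) A : bounded_linear f -> 0 <= A ->
  (forall x, Rabs (f x) <= A * vnorm x) -> dnorm f <= A.
Proof.
  intros Hf HA H. apply (proj2 (dnorm_lub f Hf)).
  intros r [x [Hx ->]]. pose proof (H x). nra.
Qed.

Lemma dnorm_lincomb_le {X : Banach} (f g h : X -> R) (c : R) :
  bounded_linear f -> bounded_linear g -> bounded_linear h ->
  (forall y, h y = f y + c * g y) -> dnorm h <= dnorm f + Rabs c * dnorm g.
Proof.
  intros Hf Hg Hh Hfg.
  pose proof (dnorm_nonneg f Hf). pose proof (dnorm_nonneg g Hg). pose proof (Rabs_pos c).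
  apply dnorm_le; [exact Hh | nra |]. intros x. rewrite Hfg.
  pose proof (dnorm_bound f x Hf). pose proof (dnorm_bound g x Hg).
  eapply Rle_trans; [apply Rabs_triang|]. rewrite Rabs_mult. nra.
Qed.

Lemma dclosure_incl {X : Banach} (A : dual X -> Prop) xs : A xs -> dclosure A xs.
Proof.
  intros HA d Hd. exists xs. split; [exact HA|].
  eapply Rle_lt_trans; [|exact Hd]. apply dnorm_le.
  - apply bounded_linear_sub; apply dual_bounded_linear.
  - lra.
  - intros x. rewrite Rminus_diag, Rabs_R0. lra.
Qed.

Lemma div_nonneg (a b : R) : 0 <= a -> 0 < b -> 0 <= a / b.
Proof. intros Ha Hb. apply Rmult_le_pos; [exact Ha | left; apply Rinv_0_lt_compat, Hb]. Qed.

Lemma quadratic_bound (c C L t : R) : 0 < c -> 0 <= C -> 0 <= L -> 0 <= t ->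
  c * t ^ 2 <= C + L * t -> t <= 1 + (C + L) / c.
Proof.
  intros Hc HC HL Ht Hq.
  assert (Hfrac : 0 <= (C + L) / c)
    by (apply div_nonneg; lra).
  destruct (Rle_lt_dec t 1) as [Ht1|Ht1]; [lra|].
  assert (Hct : c * t <= C + L) by nra.
  assert (t <= (C + L) / c); [|lra].
  apply (Rmult_le_reg_l c); [exact Hc|]. field_simplify; lra.
Qed.

(* Energy estimate behind the a priori bound: monotonicity of T between
   (x, a) and a fixed (x0, a0), with a = s - mu b, bounds mu b(x), and the
   defining inequality of J_eps(x) turns this into a quadratic bound on
   ||x|| and ||b||. *)
Lemma resolvent_energy {X : Banach} (T : operator X) (z0 x0 x : X) (a0 a b s : dual X)
  (mu eps K : R) :
  monotone T -> 0 < mu -> 0 <= K -> T (vadd x0 z0) a0 -> T (vadd x z0) a ->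
  Jeps eps x b -> (forall y, s y = a y + mu * b y) -> dnorm s <= K ->
  mu / 2 * (vnorm x ^ 2 + dnorm b ^ 2) <=
    (mu * eps + (K + dnorm a0) * vnorm x0)
    + (K + dnorm a0 + mu * vnorm x0) * (vnorm x + dnorm b).
Proof.
  intros Hmono Hmu HK Ha0 Ha Hb Hs HsK.
  set (R0 := vnorm x0). set (P := dnorm a0). set (r := vnorm x). set (beta := dnorm b).
  assert (HR0 : 0 <= R0) by apply vnorm_nonneg.
  assert (HP : 0 <= P) by apply dnorm_nonneg, dual_bounded_linear.
  assert (Hr : 0 <= r) by apply vnorm_nonneg.
  assert (Hbeta : 0 <= beta) by apply dnorm_nonneg, dual_bounded_linear.
  pose proof (Hmono _ _ _ _ Ha Ha0) as Hm. rewrite !pair_shift_diff in Hm.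
  assert (Hax : a x = s x - mu * b x) by (rewrite Hs; ring).
  assert (Hax0 : a x0 = s x0 - mu * b x0) by (rewrite Hs; ring).
  assert (Hsx : forall y, Rabs (s y) <= K * vnorm y).
  { intros y. pose proof (dnorm_bound s y (dual_bounded_linear s)).
    pose proof (vnorm_nonneg _ y). nra. }
  destruct (dnorm_bound_both b x0 (dual_bounded_linear b)) as [Hbx0 _].
  destruct (dnorm_bound_both a0 x (dual_bounded_linear a0)) as [_ Ha0x].
  destruct (dnorm_bound_both a0 x0 (dual_bounded_linear a0)) as [Ha0x0 _].
  pose proof (Rabs_le_both _ _ (Hsx x)) as Hs1.
  pose proof (Rabs_le_both _ _ (Hsx x0)) as Hs0.
  fold r R0 P beta in Hbx0, Ha0x, Ha0x0, Hs1, Hs0.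
  assert (Hmbx : mu * b x <= K * r + K * R0 + mu * (beta * R0) + P * r + P * R0).
  { assert (mu * b x0 <= mu * (beta * R0)) by (apply Rmult_le_compat_l; lra). lra. }
  unfold Jeps, pair in Hb. fold r beta in Hb.
  assert (mu * (/ 2 * r ^ 2 + / 2 * beta ^ 2) <= mu * (b x + eps))
    by (apply Rmult_le_compat_l; lra).
  assert (0 <= mu * R0 * r) by (apply Rmult_le_pos; [apply Rmult_le_pos|]; lra).
  assert (0 <= (K + P) * beta) by (apply Rmult_le_pos; lra).
  nra.
Qed.

Lemma resolvent_bound {X : Banach} (T : operator X) (z0 x0 : X) (a0 : dual X)
  (mu eps K : R) :
  monotone T -> 0 < mu -> 0 <= eps -> 0 <= K -> T (vadd x0 z0) a0 ->
  exists M, 0 <= M /\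
    forall (x : X) (a b s : dual X), T (vadd x z0) a -> Jeps eps x b ->
      (forall y, s y = a y + mu * b y) -> dnorm s <= K ->
      vnorm x + dnorm b <= M.
Proof.
  intros Hmono Hmu Heps HK Ha0.
  pose proof (vnorm_nonneg _ x0). pose proof (dnorm_nonneg a0 (dual_bounded_linear a0)).
  set (C0 := mu * eps + (K + dnorm a0) * vnorm x0).
  set (L := K + dnorm a0 + mu * vnorm x0).
  assert (HC0 : 0 <= C0) by (unfold C0; nra).
  assert (HL : 0 <= L) by (unfold L; nra).
  exists (1 + (C0 + L) / (mu / 4)). split.
  { assert (0 <= (C0 + L) / (mu / 4)) by (apply div_nonneg; lra). lra. }
  intros x a b s Ha Hb Hs HsK.
  pose proof (resolvent_energy T z0 x0 x a0 a b s mu eps K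
                Hmono Hmu HK Ha0 Ha Hb Hs HsK) as Henergy.
  fold C0 L in Henergy.
  pose proof (vnorm_nonneg _ x). pose proof (dnorm_nonneg b (dual_bounded_linear b)).
  (* (||x|| + ||b||)^2 <= 2 (||x||^2 + ||b||^2) *)
  assert (0 <= mu * (vnorm x - dnorm b) ^ 2)
    by (apply Rmult_le_pos; [lra | apply pow2_ge_0]).
  apply quadratic_bound; [lra | exact HC0 | exact HL | lra | nra].
Qed.

Lemma Jeps_perturb {X : Banach} (eps delta k : R) (x : X) (b c : dual X) (h : X -> R) :
  Jeps eps x b -> bounded_linear h -> Rabs k * dnorm h <= delta ->
  (forall y, c y = b y + k * h y) ->
  Jeps (eps + delta * (vnorm x + dnorm b) + delta ^ 2 / 2) x c.
Proof.
  intros Hb Hh Hkh Hc. unfold Jeps, pair in *.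
  pose proof (dnorm_nonneg b (dual_bounded_linear b)) as Hb0.
  pose proof (dnorm_nonneg c (dual_bounded_linear c)) as Hc0.
  pose proof (Rmult_le_pos _ _ (Rabs_pos k) (dnorm_nonneg h Hh)).
  pose proof (dnorm_lincomb_le b h c k (dual_bounded_linear b) Hh
    (dual_bounded_linear c) Hc) as Hnc.
  assert (Hsq : dnorm c ^ 2 <= (dnorm b + delta) ^ 2) by (apply pow_incr; lra).
  assert (Hkhx : - (k * h x) <= delta * vnorm x).
  { pose proof (dnorm_bound h x Hh). pose proof (vnorm_nonneg _ x).
    destruct (Rabs_le_both (k * h x) (Rabs k * dnorm h * vnorm x)).
    - rewrite Rabs_mult, Rmult_assoc. apply Rmult_le_compat_l; [apply Rabs_pos | lra].
    - nra. }
  rewrite Hc. nra.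
Qed.

Lemma shift_sum_correct {X : Banach} (T : operator X) (z0 x : X) (a b s xs : dual X)
  (mu eps eps' delta : R) :
  0 < mu -> T (vadd x z0) a -> Jeps eps x b -> (forall y, s y = a y + mu * b y) ->
  dnorm (fun y => s y - xs y) <= mu * delta ->
  eps + delta * (vnorm x + dnorm b) + delta ^ 2 / 2 <= eps' ->
  shift_sum T z0 mu eps' x xs.
Proof.
  intros Hmu Ha Hb Hs Hd Heps'.
  set (k := - / mu).
  assert (Hdiff : bounded_linear (fun y => s y - xs y))
    by (apply bounded_linear_sub; apply dual_bounded_linear).
  set (Hc := bounded_linear_lincomb b _ k (dual_bounded_linear b) Hdiff).
  set (c := to_dual _ Hc).
  assert (Hcy : forall y, c y = b y + k * (s y - xs y))
    by (intros y; unfold c; rewrite to_dual_apply; reflexivity).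
  exists a, c. split; [exact Ha | split].
  - assert (Hk : Rabs k * dnorm (fun y => s y - xs y) <= delta).
    { unfold k. rewrite Rabs_Ropp, Rabs_inv, Rabs_right by lra.
      apply (Rmult_le_reg_l mu); [exact Hmu|]. field_simplify; lra. }
    pose proof (Jeps_perturb eps delta k x b c _ Hb Hdiff Hk Hcy) as Hc'.
    unfold Jeps in *. lra.
  - intros y. rewrite Hcy, Hs. unfold k. field. lra.
Qed.

Lemma small_step (eps M : R) : 0 < eps -> 0 <= M ->
  exists delta, 0 < delta /\
    forall t, 0 <= t <= M -> eps / 2 + delta * t + delta ^ 2 / 2 <= eps.
Proof.
  intros Heps HM. set (delta := Rmin 1 (eps / (2 * (M + 1)))).
  assert (Hpos : 0 < eps / (2 * (M + 1))) by (apply Rdiv_lt_0_compat; lra).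
  assert (Hd1 : delta <= 1) by apply Rmin_l.
  assert (Hd2 : delta * (2 * (M + 1)) <= eps).
  { assert (delta <= eps / (2 * (M + 1))) by apply Rmin_r.
    apply (Rmult_le_compat_r (2 * (M + 1))) in H; [|lra].
    unfold Rdiv in H. rewrite Rmult_assoc, Rinv_l, Rmult_1_r in H; lra. }
  assert (Hd0 : 0 < delta) by (apply Rmin_glb_lt; lra).
  exists delta. split; [exact Hd0 |].
  intros t Ht.
  assert (delta * t <= delta * M) by (apply Rmult_le_compat_l; lra).
  assert (delta * delta <= delta * 1) by (apply Rmult_le_compat_l; lra).
  nra.
Qed.

Theorem mainTheorem2 (X : Banach) (T : operator X) (mu : R) :
  monotone T -> 0 < mu ->
  ((forall (eps : R) (z0 : X), 0 < eps ->
      forall xs : dual X, dclosure (range (shift_sum T z0 mu eps)) xs)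
   <->
   (forall (eps : R) (z0 : X), 0 < eps ->
      forall xs : dual X, range (shift_sum T z0 mu eps) xs)).
Proof.
  intros Hmono Hmu. split.
  2: { intros H2 eps z0 Heps xs. apply dclosure_incl, H2, Heps. }
  intros H1 eps z0 Heps xs.
  (* A point (x0, a0) in the graph of T(. + z0). *)
  destruct (H1 eps z0 Heps xs 1 Rlt_0_1) as [_ [[x0 [a0 [_ [Ha0 _]]]] _]].
  assert (Heps2 : 0 < eps / 2) by lra.
  assert (HK : 0 <= dnorm xs + 1)
    by (pose proof (dnorm_nonneg xs (dual_bounded_linear xs)); lra).
  destruct (resolvent_bound T z0 x0 a0 mu (eps / 2) (dnorm xs + 1)
              Hmono Hmu (Rlt_le _ _ Heps2) HK Ha0) as [M [HM Hbound]].
  destruct (small_step eps M Heps HM) as [delta [Hdelta Hstep]].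
  assert (Hrad : 0 < Rmin 1 (mu * delta))
    by (apply Rmin_glb_lt; [lra | apply Rmult_lt_0_compat; lra]).
  destruct (H1 (eps / 2) z0 Heps2 xs _ Hrad) as [s [[x [a [b [Ha [Hb Hs]]]]] Hsxs]].
  assert (Hdiff : bounded_linear (fun y => s y - xs y))
    by (apply bounded_linear_sub; apply dual_bounded_linear).
  assert (Hsnorm : dnorm s <= dnorm xs + 1).
  { assert (Hsplit : forall y, s y = xs y + 1 * (s y - xs y)) by (intros y; ring).
    pose proof (dnorm_lincomb_le xs _ s 1 (dual_bounded_linear xs) Hdiff
      (dual_bounded_linear s) Hsplit) as H.
    rewrite Rabs_R1 in H. pose proof (Rmin_l 1 (mu * delta)). lra. }
  pose proof (Hbound x a b s Ha Hb Hs Hsnorm) as Hxb.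
  exists x. apply (shift_sum_correct T z0 x a b s xs mu (eps / 2) eps delta Hmu Ha Hb Hs).
  - pose proof (Rmin_r 1 (mu * delta)). lra.
  - apply Hstep. split; [|exact Hxb].
    pose proof (vnorm_nonneg _ x). pose proof (dnorm_nonneg b (dual_bounded_linear b)). lra.
Qed.
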